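(* Let $G$ be a finite connected graph and $F$ a valid matching rule for $G$. Then there exists a prefix matching of $\Gamma$ generated by $F$.
   Context: $G$ is a finite simple connected graph with shortest-path distance $d$; $\ell(x_0,\dots,x_k)=\sum_{i=0}^{k-1}d(x_i,x_{i+1})$. A sequence is an element of $I_{k,l}(G)=\{(x_0,\dots,x_k)\in V(G)^{k+1}:x_i\ne x_{i+1}\ \forall i,\ \ell(x_0,\dots,x_k)=l\}$ for some $k,l\ge0$. Let $\Gamma$ be the directed graph whose vertices are all sequences, with an edge $a\to b$ whenever $a=(x_0,\dots,x_k)$ and $b=(x_0,\dots,\hat x_i,\dots,x_k)$ for some $1\le i\le k-1$ with $\ell(b)=\ell(a)$. A matching is a set of pairwise vertex-disjoint edges of $\Gamma$. Given a matching, the matching state of a sequence $(x_0,\dots,x_k)$ is: ''unmatched'' if it lies on no matching edge; ''insert$(i,v)$'' if it is matched to $(x_0,\dots,x_i,v,x_{i+1},\dots,x_k)$; ''delete$(i)$'' if it is matched to $(x_0,\dots,\hat x_i,\dots,x_k)$. A prefix matching is a matching such that whenever $(x_0,\dots,x_k)$ has state insert$(i,v)$ (resp. delete$(i)$), every sequence of the form $(x_0,\dots,x_{i+1},y_{i+2},\dots,y_{k'})$ has the same state insert$(i,v)$ (resp. delete$(i)$). A matching rule is a function $F$ from sequences to the set of symbols $\{\epsilon\}\cup\{\iota(v):v\in V(G)\}\cup\{\delta\}$. A prefix matching $M$ is generated by $F$ if for every sequence $(x_0,\dots,x_k)$, $k\ge1$, whose prefix $(x_0,\dots,x_{k-1})$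 is unmatched in $M$, the state of $(x_0,\dots,x_k)$ is insert$(k-1,v)$ iff $F(x_0,\dots,x_k)=\iota(v)$, and is delete$(k-1)$ iff $F(x_0,\dots,x_k)=\delta$. $F$ is valid if: (1) whenever $F(x_0,\dots,x_k)=\iota(v)$, then $v\notin\{x_{k-1},x_k\}$, $d(x_{k-1},v)+d(v,x_k)=d(x_{k-1},x_k)$, $F(x_0,\dots,x_{k-1},v)=\epsilon$ and $F(x_0,\dots,x_{k-1},v,x_k)=\delta$; (2) whenever $F(x_0,\dots,x_k)=\delta$, then $d(x_{k-2},x_{k-1})+d(x_{k-1},x_k)=d(x_{k-2},x_k)$ and $F(x_0,\dots,x_{k-2},x_k)=\iota(x_{k-1})$. *)

From mathcomp Require Import all_boot.
Set Implicit Arguments. Unset Strict Implicit. Unset Printing Implicit Defensive.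

Section Defs.
Variables (T : finType) (e : rel T).

Fixpoint reach (n : nat) (x y : T) : bool :=
  if n is n'.+1 then [exists z, e x z && reach n' z y] else x == y.

(* shortest-path distance (least n with a walk of length n; in a connected
   graph this is < #|T|) *)
Definition dist (x y : T) : nat := find (fun n => reach n x y) (iota 0 #|T|.+1).

Definition len (s : seq T) : nat :=
  if s is x :: t then sumn (pairmap dist x t) else 0.

Definition isseq (s : seq T) : bool :=
  (s != [::]) && sorted (fun a b => a != b) s.

Definition del (i : nat) (s : seq T) : seq T := take i s ++ drop i.+1 s.
Definition ins (i : nat) (v : T) (s : seq T) : seq T := take i.+1 s ++ v :: drop i.+1 s.

Definition gedge (a b : seq T) : Prop :=
  [/\ isseq a, isseq b &
   exists i, [/\ 1 <= i, i.+2 <= size a, b = del i a & len b = len a]].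

(* a matching: a set of pairwise vertex-disjoint edges of Gamma,
   given as the relation M a b  <->  (a -> b) is in the matching *)
Definition is_matching (M : seq T -> seq T -> Prop) : Prop :=
  (forall a b, M a b -> gedge a b) /\
  (forall a b a' b', M a b -> M a' b' ->
     (a = a' \/ a = b' \/ b = a' \/ b = b') -> a = a' /\ b = b').

Definition unmatched (M : seq T -> seq T -> Prop) (s : seq T) : Prop :=
  ~ exists t, M s t \/ M t s.
Definition st_ins (M : seq T -> seq T -> Prop) (s : seq T) (i : nat) (v : T) : Prop :=
  M (ins i v s) s.
Definition st_del (M : seq T -> seq T -> Prop) (s : seq T) (i : nat) : Prop :=
  M s (del i s).

Definition is_prefix_matching (M : seq T -> seq T -> Prop) : Prop :=
  is_matching M /\
  (forall s i v, isseq s -> st_ins M s i v ->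
     forall t, isseq t -> take i.+2 t = take i.+2 s -> st_ins M t i v) /\
  (forall s i, isseq s -> st_del M s i ->
     forall t, isseq t -> take i.+2 t = take i.+2 s -> st_del M t i).

End Defs.

Inductive symb (T : Type) := Eps | Iota of T | Delta.
Arguments Eps {T}. Arguments Delta {T}.

Section Rules.
Variables (T : finType) (e : rel T).
Local Notation d := (dist e).

Definition generated_by (F : seq T -> symb T) (M : seq T -> seq T -> Prop) : Prop :=
  forall s, isseq s -> 2 <= size s -> unmatched M (take (size s).-1 s) ->
    (forall v, st_ins M s (size s).-2 v <-> F s = Iota v) /\
    (st_del M s (size s).-2 <-> F s = Delta).

Definition valid_rule (F : seq T -> symb T) : Prop :=
  (forall s v, isseq s -> 2 <= size s -> F s = Iota v ->
     let xk := nth v s (size s).-1 in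
     let xk1 := nth v s (size s).-2 in
     let pre := take (size s).-1 s in
     [/\ v != xk1, v != xk,
         d xk1 v + d v xk = d xk1 xk,
         F (rcons pre v) = Eps &
         F (rcons (rcons pre v) xk) = Delta]) /\
  (forall s, isseq s -> F s = Delta ->
     3 <= size s /\
     forall x0 : T,
     let xk := nth x0 s (size s).-1 in
     let xk1 := nth x0 s (size s).-2 in
     let xk2 := nth x0 s (size s - 3) in
     d xk2 xk1 + d xk1 xk = d xk2 xk /\
     F (rcons (take (size s).-2 s) xk) = Iota xk1).

End Rules.

(* Proof: the state of a sequence (x_0,...,x_k) is read off its first prefix
   (x_0,...,x_{j+1}) on which F is not epsilon: for iota(v) the sequence is
   matched with the one obtained by inserting v after x_j, for delta with the
   one obtained by deleting x_j.  Validity of F makes the two prescriptions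
   inverse to each other: inserting v gives a sequence whose first
   non-epsilon prefix is one step longer and carries delta (the prefix ending
   at v carries epsilon), and deleting x_j gives one whose first non-epsilon
   prefix ends at x_{j+1} and carries iota(x_j).  The state only depends on
   that prefix, so the matching is prefix; and if (x_0,...,x_{k-1}) is
   unmatched then F is epsilon on all of its prefixes, so the state of
   (x_0,...,x_k) is F(x_0,...,x_k). *)

From mathcomp Require Import all_boot zify.
Set Implicit Arguments. Unset Strict Implicit. Unset Printing Implicit Defensive.

Section Take.
Variable T : Type.
Implicit Types (a l : seq T).

Lemma take_cat_rcons n a x l : n <= (size a).+1 -> take n (a ++ x :: l) = take n (rcons a x).
Proof. by move=> hn; rewrite -cat_rcons takel_cat // size_rcons. Qed.

Lemma nth_cat_add (x0 : T) a l k : nth x0 (a ++ l) (size a + k) = nth x0 l k.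
Proof. by rewrite nth_cat ltnNge leq_addr addKn. Qed.

End Take.

Section InsDel.
Variable T : finType.
Implicit Types (a l s : seq T).
Local Notation neq := (fun p q : T => p != q).

Lemma isseq_cat_cons a x l : isseq (a ++ x :: l) = sorted neq (rcons a x) && path neq x l.
Proof. by rewrite /isseq sorted_cat_cons; case: a. Qed.

Lemma isseq_catl (p q : seq T) : isseq (p ++ q) -> p != [::] -> isseq p.
Proof.
case/andP=> _ /(take_sorted (size p)); rewrite takel_cat // take_size => hp hne.
by rewrite /isseq hne.
Qed.

Lemma ins_cat a x l v : ins (size a) v (a ++ x :: l) = a ++ x :: v :: l.
Proof.
rewrite /ins take_cat_rcons // take_oversize ?size_rcons //.
by rewrite -[a ++ x :: l]cat_rcons drop_size_cat ?size_rcons // cat_rcons.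
Qed.

Lemma del_cat a x l : del (size a) (a ++ x :: l) = a ++ l.
Proof. by rewrite /del take_size_cat // -cat_rcons drop_size_cat // size_rcons. Qed.

Lemma size_ins i v s : size (ins i v s) = (size s).+1.
Proof. rewrite /ins size_cat /= size_take size_drop; case: ltnP; lia. Qed.

Lemma nth_ins_lt x0 i v s k : k <= i -> k < size s -> nth x0 (ins i v s) k = nth x0 s k.
Proof.
move=> hki hk; have hk' : k < size (take i.+1 s) by rewrite size_take; case: ifP; lia.
by rewrite /ins nth_cat hk' nth_take.
Qed.

Lemma nth_ins_eq x0 i v s : i < size s -> nth x0 (ins i v s) i.+1 = v.
Proof. by move=> hi; rewrite /ins nth_cat size_takel // ltnn subnn. Qed.

Lemma nth_ins_gt x0 i v s : i < size s -> nth x0 (ins i v s) i.+2 = nth x0 s i.+1.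
Proof.
by move=> hi; rewrite /ins nth_cat size_takel // ltnNge leqnSn /= subSnn /= nth_drop addn0.
Qed.

Lemma ins_neq_lt i j v w s : sorted neq (ins i v s) -> i < j -> i.+1 < size s ->
  ins i v s <> ins j w s.
Proof.
move=> /(sortedP v) hs hij hi E.
have := hs i.+1; rewrite size_ins ltnS hi nth_ins_gt ?(ltnW hi) // {1}E nth_ins_lt // eqxx.
by move/(_ isT).
Qed.

Lemma ins_inj i j v w s : sorted neq (ins i v s) -> j.+1 < size s ->
  ins i v s = ins j w s -> i = j /\ v = w.
Proof.
move=> hs hj E; case: (ltngtP i j) => hij.
- by case: (ins_neq_lt hs hij (leq_ltn_trans hij (ltnW hj)) E).
- by move: hs; rewrite E => /ins_neq_lt /(_ hij hj (esym E)).
- by subst j; rewrite -(nth_ins_eq v v (ltnW hj)) E nth_ins_eq // ltnW.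
Qed.

Lemma size_del i s : i < size s -> size (del i s) = (size s).-1.
Proof. by move=> hi; rewrite /del size_cat size_takel ?size_drop 1?ltnW //; lia. Qed.

Lemma nth_del_lt x0 i s k : k < i -> i <= size s -> nth x0 (del i s) k = nth x0 s k.
Proof. by move=> hk hi; rewrite /del nth_cat size_takel // hk nth_take. Qed.

Lemma nth_del_ge x0 i s k : i <= k -> i < size s -> nth x0 (del i s) k = nth x0 s k.+1.
Proof.
move=> hk hi; rewrite /del nth_cat (size_takel (ltnW hi)) ltnNge hk /= nth_drop.
by congr nth; lia.
Qed.

Lemma del_neq_lt i j s : sorted neq s -> i < j -> j < size s -> del i s <> del j s.
Proof.
case: s => [|x0 s] // /(sortedP x0) hs hij hj E.
have := hs i (leq_ltn_trans hij hj).
by rewrite -(nth_del_ge x0 (leqnn i)) ?(ltn_trans hij) // E nth_del_lt ?(ltnW hj) // eqxx.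
Qed.

Lemma del_inj i j s : sorted neq s -> j < size s -> del i s = del j s -> i = j.
Proof.
move=> hs hj E.
have hi : i < size s.
  rewrite ltnNge; apply/negP => hi.
  move: E; rewrite /del take_oversize // drop_oversize 1?ltnW // cats0 => /(congr1 size).
  by rewrite -/(del j s) size_del //; lia.
by case: (ltngtP i j) => hij //; [case: (del_neq_lt hs hij hj) | case: (del_neq_lt hs hij hi)].
Qed.

Lemma isseq_ins a x v y c : isseq (a ++ x :: y :: c) -> v != x -> v != y ->
  isseq (a ++ x :: v :: y :: c).
Proof.
by rewrite !isseq_cat_cons /= => /and3P[-> _ ->] vx ->; rewrite eq_sym vx.
Qed.

Lemma isseq_del a w x y c : isseq (a ++ w :: x :: y :: c) -> w != y -> isseq (a ++ w :: y :: c).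
Proof. by rewrite !isseq_cat_cons /= => /and4P[-> _ _ ->] ->. Qed.

End InsDel.

Section Length.
Variables (T : finType) (e : rel T).
Local Notation d := (dist e).

Lemma dist_eq0 x y : (d x y == 0) = (x == y).
Proof. by rewrite /dist /=; case: (x == y). Qed.

Lemma len_cat_cons a x l : len e (a ++ x :: l) = len e (rcons a x) + len e (x :: l).
Proof. by case: a => [|a0 a] //=; rewrite -cats1 !pairmap_cat !sumn_cat /= addn0 addnA. Qed.

End Length.

Section RuleMatching.
Variables (T : finType) (e : rel T) (F : seq T -> symb T).
Hypothesis F_valid : valid_rule e F.
Local Notation d := (dist e).
Implicit Types (a l p s t : seq T).

Definition active (X : symb T) : bool := if X is Eps then false else true.

Definition fires s j := active (F (take j.+2 s)).

Definition silent p := forall k, k.+2 <= size p -> ~~ fires p k.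

Definition state_index s := find (fires s) (iota 0 (size s).-1).

Definition state s :=
  if state_index s < (size s).-1 then F (take (state_index s).+2 s) else Eps.

Lemma fires_state_index s : state_index s < (size s).-1 -> fires s (state_index s).
Proof.
move=> hj; have hh : has (fires s) (iota 0 (size s).-1) by rewrite has_find size_iota.
by have := nth_find 0 hh; rewrite nth_iota.
Qed.

Lemma state_activeP s : active (state s) = (state_index s < (size s).-1).
Proof. by rewrite /state; case: ifP => // /fires_state_index. Qed.

Lemma not_fires_before s k : k < state_index s -> k < (size s).-1 -> ~~ fires s k.
Proof. by move=> hk hks; have := before_find 0 hk; rewrite nth_iota // add0n => ->. Qed.

Lemma state_index_eq s j : j < (size s).-1 -> fires s j ->
  (forall k, k < j -> ~~ fires s k) -> state_index s = j.
Proof.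
move=> hj fj hk; case: (ltngtP (state_index s) j) => // h.
- by have := hk _ h; rewrite fires_state_index // (ltn_trans h hj).
- by rewrite (negbTE (not_fires_before h hj)) in fj.
Qed.

Lemma fires_cat_rcons a x l k : k < size a -> fires (a ++ x :: l) k = fires (rcons a x) k.
Proof. by move=> hk; rewrite /fires take_cat_rcons. Qed.

Lemma silent_catl p q : silent (p ++ q) -> silent p.
Proof.
move=> h k hk; have := h k; rewrite /fires takel_cat // size_cat; apply.
exact: leq_trans hk (leq_addr _ _).
Qed.

Lemma silent_rcons p v : silent p -> F (rcons p v) = Eps -> silent (rcons p v).
Proof.
move=> h hF k; rewrite size_rcons ltnS leq_eqVlt => /orP[/eqP hk | hk].
  by rewrite /fires (_ : k.+2 = size (rcons p v)) ?take_size ?hF // size_rcons hk.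
by rewrite /fires -cats1 takel_cat //; exact: h.
Qed.

Lemma state_cat a x y c : silent (rcons a x) -> active (F (a ++ [:: x; y])) ->
  state_index (a ++ x :: y :: c) = size a /\ state (a ++ x :: y :: c) = F (a ++ [:: x; y]).
Proof.
move=> hsil hF.
have htake : take (size a).+2 (a ++ x :: y :: c) = a ++ [:: x; y].
  by rewrite -addn2 takeD take_size_cat // drop_size_cat //= take0.
have hsz : size a < (size (a ++ x :: y :: c)).-1 by rewrite size_cat /=; lia.
have hidx : state_index (a ++ x :: y :: c) = size a.
  apply: state_index_eq => //; first by rewrite /fires htake.
  by move=> k hk; rewrite fires_cat_rcons //; apply: hsil; rewrite size_rcons.
by split => //; rewrite /state hidx hsz htake.
Qed.

Lemma state_split s : active (state s) -> exists a x y c,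
  [/\ s = a ++ x :: y :: c, silent (rcons a x) & state s = F (a ++ [:: x; y])].
Proof.
rewrite state_activeP => hj.
have [x [y [c Ed]]] : exists x y c, drop (state_index s) s = [:: x, y & c].
  case Ed: (drop _ s) => [|x [|y c]]; [| | by exists x, y, c];
    by move/(congr1 size): Ed; rewrite size_drop /=; lia.
have ha : size (take (state_index s) s) = state_index s by rewrite size_takel //; lia.
have Es : s = take (state_index s) s ++ [:: x, y & c] by rewrite -Ed cat_take_drop.
exists (take (state_index s) s), x, y, c; split => //.
- move=> k; rewrite size_rcons ha ltnS => hk.
  have <- : fires s k = fires (rcons (take (state_index s) s) x) k.
    by rewrite {1}Es fires_cat_rcons ?ha.
  by rewrite not_fires_before //; lia.
- by rewrite /state hj -addn2 takeD Ed /= take0.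
Qed.

Lemma valid_Iota a x y v : isseq (a ++ [:: x; y]) -> F (a ++ [:: x; y]) = Iota v ->
  [/\ v != x, v != y, d x v + d v y = d x y,
      F (a ++ [:: x; v]) = Eps & F (a ++ [:: x; v; y]) = Delta].
Proof.
move=> hs hF; have := F_valid.1 _ v hs; rewrite size_cat addn2 => /(_ isT hF) /=.
rewrite -[(size a).+1]addn1 nth_cat_add take_cat_rcons ?addn1 //.
by rewrite take_oversize ?size_rcons ?addn1 // nth_cat ltnn subnn -!cats1 -!catA.
Qed.

Lemma valid_Delta b x y : isseq (b ++ [:: x; y]) -> F (b ++ [:: x; y]) = Delta ->
  exists a w, [/\ b = rcons a w, d w x + d x y = d w y & F (a ++ [:: w; y]) = Iota x].
Proof.
move=> hs hF; have [h3 /(_ x) /= hv] := F_valid.2 _ hs hF.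
case/lastP: b {hs hF} h3 hv => [|a w] // _; exists a, w.
move: hv; rewrite cat_rcons size_cat addnK addn3 /= -[(size a).+2]addn2 -[(size a).+1]addn1.
rewrite !nth_cat_add nth_cat ltnn subnn take_cat_rcons ?addn1 //.
by rewrite take_oversize ?size_rcons ?addn1 // -!cats1 -!catA; case.
Qed.

Lemma state_Iota_ins s v : isseq s -> state s = Iota v ->
  let u := ins (state_index s) v s in
  [/\ isseq u, state u = Delta, state_index u = (state_index s).+1,
      del (state_index u) u = s & len e u = len e s].
Proof.
move=> hs hst; have act : active (state s) by rewrite hst.
have [a [x [y [c [Es hsil hF]]]]] := state_split act.
rewrite hst in hF; subst s.
have act_xy : active (F (a ++ [:: x; y])) by rewrite -hF.
have [-> _] := state_cat c hsil act_xy.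
have hxy : isseq (a ++ [:: x; y]) by apply: (@isseq_catl _ _ c); [rewrite -catA | by case: (a)].
have [vx vy dxy Fe Fd] := valid_Iota hxy (esym hF).
have hsil' : silent (rcons (rcons a x) v).
  by apply: silent_rcons => //; rewrite -!cats1 -catA.
have act_xvy : active (F (rcons a x ++ [:: v; y])) by rewrite cat_rcons Fd.
have [idx st] := state_cat c hsil' act_xvy.
rewrite ins_cat /= -[a ++ _]cat_rcons idx; split.
- by rewrite cat_rcons; exact: isseq_ins.
- by rewrite st cat_rcons Fd.
- by rewrite size_rcons.
- by rewrite del_cat cat_rcons.
- by rewrite !cat_rcons !len_cat_cons /= [d x v + _]addnA dxy.
Qed.

Definition rule_matching a b :=
  isseq b /\ exists v, state b = Iota v /\ a = ins (state_index b) v b.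

Lemma state_Delta_matched s : isseq s -> state s = Delta ->
  rule_matching s (del (state_index s) s).
Proof.
move=> hs hst; have act : active (state s) by rewrite hst.
have [b [x [y [c [Es hsil hF]]]]] := state_split act.
rewrite hst in hF; subst s.
have act_xy : active (F (b ++ [:: x; y])) by rewrite -hF.
have [-> _] := state_cat c hsil act_xy.
have hxy : isseq (b ++ [:: x; y]) by apply: (@isseq_catl _ _ c); [rewrite -catA | by case: (b)].
have [a [w [Eb dwxy Fwy]]] := valid_Delta hxy (esym hF); subst b.
have hsil' : silent (rcons a w) by apply: (silent_catl (q := [:: x])); rewrite cats1.
have act_wy : active (F (a ++ [:: w; y])) by rewrite Fwy.
have [idx st] := state_cat c hsil' act_wy.
rewrite del_cat !cat_rcons in hs *.
have wx : w != x by move: hs; rewrite isseq_cat_cons /= => /andP[_ /andP[]].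
have wy : w != y.
  apply: contra wx => /eqP wy; move: dwxy; rewrite wy.
  have /eqP -> : d y y == 0 by rewrite dist_eq0.
  by move=> /eqP; rewrite addn_eq0 dist_eq0 => /andP[].
split; first exact: isseq_del hs wy.
by exists x; rewrite st Fwy idx ins_cat.
Qed.

Lemma rule_matching_inv a b : rule_matching a b ->
  [/\ gedge e a b, state a = Delta & b = del (state_index a) a].
Proof.
case=> hb [v [hv ->]]; have [hu stu idxu delu lenu] := state_Iota_ins hb hv.
have := state_activeP (ins (state_index b) v b); rewrite stu /= => /esym hlt.
split => //; split => //; exists (state_index (ins (state_index b) v b)).
by rewrite delu; split => //; [rewrite idxu | lia].
Qed.

Lemma st_ins_rule_matching s i v :
  st_ins rule_matching s i v <-> [/\ isseq s, state s = Iota v & i = state_index s].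
Proof.
split=> [[hs [w [hw E]]] | [hs hv ->]]; last by split => //; exists v.
have [/andP[_ hu] _ _ _ _] := state_Iota_ins hs hw.
have := state_activeP s; rewrite hw /= => /esym hlt.
have hj : (state_index s).+1 < size s by lia.
by move: hu; rewrite -E => /ins_inj /(_ hj E) [-> ->].
Qed.

Lemma st_del_rule_matching s i : isseq s ->
  st_del rule_matching s i <-> state s = Delta /\ i = state_index s.
Proof.
move=> hs; split=> [hM | [hd ->]]; last exact: state_Delta_matched.
have [_ hd Edel] := rule_matching_inv hM.
have := state_activeP s; rewrite hd /= => /esym hlt.
split => //; apply: del_inj Edel; [by case/andP: hs | lia].
Qed.

Lemma state_prefix s t : active (state s) ->
  take (state_index s).+2 t = take (state_index s).+2 s ->
  state_index t = state_index s /\ state t = state s.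
Proof.
rewrite state_activeP => hj E.
have hsz : (state_index s).+2 <= size t by move/(congr1 size): E; rewrite !size_take_min; lia.
have fires_eq k : k <= state_index s -> fires t k = fires s k.
  by move=> hk; rewrite /fires -(@take_takel _ _ (state_index s).+2) // E take_takel.
have idx : state_index t = state_index s.
  apply: state_index_eq; first lia.
    by rewrite fires_eq ?fires_state_index.
  by move=> k hk; rewrite fires_eq ?not_fires_before //; lia.
by split => //; rewrite /state idx E hj ifT //; lia.
Qed.

Lemma state_last s : 2 <= size s -> (size s).-2 <= state_index s ->
  state s = F s /\ (active (F s) -> state_index s = (size s).-2).
Proof.
move=> h2 hle; have hsz : (size s).-2.+2 = size s by lia.
case: (ltnP (state_index s) (size s).-1) => hlt.
  have hidx : state_index s = (size s).-2 by lia.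
  by rewrite /state hlt hidx hsz take_size.
have nF : ~~ active (F s).
  by have := @not_fires_before s (size s).-2; rewrite /fires hsz take_size; apply; lia.
by rewrite /state ltnNge hlt /=; case: (F s) nF.
Qed.

Lemma active_state_matched s : isseq s -> active (state s) -> ~ unmatched rule_matching s.
Proof.
move=> hs; case Est: (state s) => [|v|] // _ hun; apply: hun.
- by exists (ins (state_index s) v s); right; split => //; exists v.
- by exists (del (state_index s) s); left; exact: state_Delta_matched.
Qed.

Lemma state_index_unmatched_prefix s : isseq s -> 2 <= size s ->
  unmatched rule_matching (take (size s).-1 s) -> (size s).-2 <= state_index s.
Proof.
move=> hs h2 hun; rewrite leqNgt; apply/negP => hlt.
have act : active (state s) by rewrite state_activeP; lia.
have hp : isseq (take (size s).-1 s).
  apply: (@isseq_catl _ _ (drop (size s).-1 s)); first by rewrite cat_take_drop.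
  by rewrite -size_eq0 size_takel ?leq_pred //; lia.
have Et : take (state_index s).+2 (take (size s).-1 s) = take (state_index s).+2 s.
  by rewrite take_takel //; lia.
have [_ stp] := state_prefix act Et.
by apply: (active_state_matched hp) => //; rewrite stp.
Qed.

Lemma rule_matching_is_matching : is_matching e rule_matching.
Proof.
split=> [a b /rule_matching_inv[] // | a b a' b' hM hM'].
have [_ da eb] := rule_matching_inv hM; have [_ da' eb'] := rule_matching_inv hM'.
case: hM hM' => hb [v [hv ea]] [hb' [v' [hv' ea']]].
case=> [E|[E|[E|E]]].
- by split; rewrite // eb eb' E.
- by rewrite -E da in hv'.
- by rewrite E da' in hv.
- by move: hv'; rewrite -E hv => -[ev]; split; rewrite // ea ea' -E ev.
Qed.

Lemma rule_matching_prefix : is_prefix_matching e rule_matching.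
Proof.
split; [exact: rule_matching_is_matching | split].
- move=> s i v _ /st_ins_rule_matching[hs hv ->] t ht Et.
  have act : active (state s) by rewrite hv.
  have [idx st] := state_prefix act Et.
  by apply/st_ins_rule_matching; rewrite idx st.
- move=> s i hs /(st_del_rule_matching _ hs)[hd ->] t ht Et.
  have act : active (state s) by rewrite hd.
  have [idx st] := state_prefix act Et.
  by apply/(st_del_rule_matching _ ht); rewrite idx st.
Qed.

Lemma rule_matching_generated : generated_by F rule_matching.
Proof.
move=> s hs h2 hun.
have [Fs idxs] := state_last h2 (state_index_unmatched_prefix hs h2 hun).
split=> [v|]; [rewrite st_ins_rule_matching | rewrite st_del_rule_matching //].
- split=> [[_ hv _] | hF]; first by rewrite -Fs.
  by split; rewrite // ?Fs // idxs // hF.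
- split=> [[hd _] | hF]; first by rewrite -Fs.
  by split; rewrite ?Fs // idxs // hF.
Qed.

End RuleMatching.

Theorem lemma3p2 (T : finType) (e : rel T)
  (e_sym : symmetric e) (e_irr : irreflexive e)
  (e_conn : forall x y : T, connect e x y)
  (F : seq T -> symb T) (F_valid : valid_rule e F) :
  exists M : seq T -> seq T -> Prop,
    is_prefix_matching e M /\ generated_by F M.
Proof.
exists (rule_matching F); split.
- exact: rule_matching_prefix F_valid.
- exact: rule_matching_generated F_valid.
Qed.
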